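(* Let $k\in\mathbb{N}$, $p\in[1,\infty]$, and $\alpha,\beta\ge 0$. Any algorithm that is a $(k,p,\alpha,\beta)$-coreset estimator is an $(\mathcal{F}^{\mathrm{coreset}}_{p,k}, 4\alpha+\beta)$-accurate sanitizer.
   Context: Let $\mathbb{B}_{p,d}=\{x\in\mathbb{R}^d:\|x\|_p\le 1\}$. For $\mathcal{C}\in\mathbb{B}_{p,d}^k$ and $x\in\mathbb{B}_{p,d}$, $\mathrm{cost}_{\mathcal{C},p}(x)=\min_{c\in\mathcal{C}}\|x-c\|_p^2$; for a query $f$ and dataset $D$ (finite tuple of points), $f(D)=\mathbb{E}_{x\sim D}[f(x)]$ (average over points of $D$). A dataset $\tilde D \in \mathbb{B}_{p,d}^*$ (of any size) is a $(k,p,\alpha,\beta)$-coreset of $D \in \mathbb{B}_{p,d}^*$ if for all $\mathcal{C}\in\mathbb{B}_{p,d}^k$, $(1-\alpha)\,\mathrm{cost}_{\mathcal{C},p}(D) - \beta \le \mathrm{cost}_{\mathcal{C},p}(\tilde D) \le (1+\alpha)\,\mathrm{cost}_{\mathcal{C},p}(D) + \beta$. An algorithm $\mathcal{A}$ is a $(k,p,\alpha,\beta,d,n)$-coreset estimator if for every $D\in\mathbb{B}_{p,d}^n$, with probability at least $2/3$, $\mathcal{A}(D)$ is a $(k,p,\alpha,\beta)$-coreset of $D$; it is a $(k,p,\alpha,\beta)$-coreset estimator if there is a constant $\nu>0$ such that for all $d\in\mathbb{N}$ and $n\ge\Theta(d^\nu)$ it is a $(k,p,\alpha,\beta,d,n)$-coreset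 estimator. A sanitizer maps datasets to datasets. For a family $\mathcal{F}$ of queries, $\tilde D$ is an $(\mathcal{F},a)$-accurate estimate of $D$ if $|f(\tilde D)-f(D)|\le a$ for all $f\in\mathcal{F}$; a sanitizer is $(\mathcal{F},a,n)$-accurate if for every $D\in\mathcal{X}^n$, with probability at least $2/3$ its output is an $(\mathcal{F},a)$-accurate estimate of $D$. With $\mathcal{F}^{\mathrm{coreset}}_{p,d,k}=\{\mathrm{cost}_{\mathcal{C},p}:\mathcal{C}\in\mathbb{B}_{p,d}^k\}$ and $\mathcal{F}^{\mathrm{coreset}}_{p,k}=\bigcup_d\mathcal{F}^{\mathrm{coreset}}_{p,d,k}$, a sanitizer is $(\mathcal{F}^{\mathrm{coreset}}_{p,k},a)$-accurate if there is a constant $\nu>0$ such that for all $d\in\mathbb{N}$ and $n\ge\Theta(d^\nu)$ it is $(\mathcal{F}^{\mathrm{coreset}}_{p,d,k},a,n)$-accurate. *)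

From HB Require Import structures.
From mathcomp Require Import all_boot all_order all_algebra.
From mathcomp Require Import all_classical all_reals all_analysis.
Set Implicit Arguments. Unset Strict Implicit. Unset Printing Implicit Defensive.
Import Order.TTheory GRing.Theory Num.Theory.
Local Open Scope classical_set_scope.
Local Open Scope ring_scope.

Section Defs.
Variable R : realType.

Definition vec (d : nat) := 'rV[R]_d.

Definition lpnorm (p : \bar R) (d : nat) (v : vec d) : R :=
  match p with
  | +oo%E => \big[Num.max/0]_(i < d) `|v ord0 i|
  | EFin r => (\sum_(i < d) (`|v ord0 i| `^ r)) `^ (r^-1)
  | -oo%E => 0
  end.

Definition in_ball (p : \bar R) (d : nat) (x : vec d) : bool := lpnorm p x <= 1.

Definition dataset_in_ball (p : \bar R) (d : nat) (D : seq (vec d)) : bool :=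
  all (@in_ball p d) D.

(* f(D) = average of f over the points of D (convention: 0 for the empty dataset) *)
Definition avg (d : nat) (f : vec d -> R) (D : seq (vec d)) : R :=
  (\sum_(x <- D) f x) / (size D)%:R.

(* cost_{C,p}(x) = min_{c in C} ||x - c||_p^2 ; C is a sequence of k centers
   (convention: 0 for the empty set of centers, i.e. k = 0) *)
Definition cost (p : \bar R) (d : nat) (C : seq (vec d)) (x : vec d) : R :=
  if C is c :: cs then
    \big[Num.min/(lpnorm p (x - c)) ^+ 2]_(c' <- cs) (lpnorm p (x - c')) ^+ 2
  else 0.

Definition centers (p : \bar R) (d k : nat) (C : seq (vec d)) : Prop :=
  size C = k /\ dataset_in_ball p C.

Definition is_coreset (k : nat) (p : \bar R) (alpha beta : R) (d : nat)
  (D tD : seq (vec d)) : Prop :=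
  dataset_in_ball p tD /\
  forall C, @centers p d k C ->
    (1 - alpha) * avg (cost p C) D - beta <= avg (cost p C) tD /\
    avg (cost p C) tD <= (1 + alpha) * avg (cost p C) D + beta.

Definition coreset_queries (p : \bar R) (d k : nat) : set (vec d -> R) :=
  [set f | exists C, @centers p d k C /\ f = cost p C].

Definition accurate_estimate (d : nat) (F : set (vec d -> R)) (a : R)
  (D tD : seq (vec d)) : Prop :=
  forall f, F f -> `|avg f tD - avg f D| <= a.

(* A randomized algorithm uses a random seed w drawn from a probability
   space (Omega, P), and works in every dimension d. *)
Definition algorithm (dO : measure_display) (Omega : measurableType dO) :=
  forall d : nat, Omega -> seq (vec d) -> seq (vec d).

(* "with probability at least 2/3" (inner probability: some measurable event
   of probability >= 2/3 on which the property holds) *)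
Definition whp (dO : measure_display) (Omega : measurableType dO)
  (P : probability Omega R) (E : set Omega) : Prop :=
  exists F, [/\ measurable F, F `<=` E & ((2 / 3)%:E <= P F)%E].

Definition coreset_estimator_dn (dO : measure_display) (Omega : measurableType dO)
  (P : probability Omega R) (A : algorithm Omega)
  (k : nat) (p : \bar R) (alpha beta : R) (d n : nat) : Prop :=
  forall D : seq (vec d), size D = n -> dataset_in_ball p D ->
    whp P [set w | is_coreset k p alpha beta D (A d w D)].

Definition accurate_sanitizer_dn (dO : measure_display) (Omega : measurableType dO)
  (P : probability Omega R) (A : algorithm Omega)
  (p : \bar R) (d : nat) (F : set (vec d -> R)) (a : R) (n : nat) : Prop :=
  forall D : seq (vec d), size D = n -> dataset_in_ball p D ->
    whp P [set w | accurate_estimate F a D (A d w D)].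

(* "there is a constant nu > 0 such that for all d and n >= Theta(d^nu)":
   read as: there are constants nu > 0 and c > 0 such that the property holds
   for all d and all n >= c * d^nu *)
Definition for_large_n (Q : nat -> nat -> Prop) : Prop :=
  exists nu c : R, [/\ 0 < nu, 0 < c &
    forall d n : nat, c * ((d%:R : R) `^ nu) <= n%:R -> Q d n].

Definition coreset_estimator (dO : measure_display) (Omega : measurableType dO)
  (P : probability Omega R) (A : algorithm Omega)
  (k : nat) (p : \bar R) (alpha beta : R) : Prop :=
  for_large_n (coreset_estimator_dn P A k p alpha beta).

Definition coreset_accurate_sanitizer (dO : measure_display) (Omega : measurableType dO)
  (P : probability Omega R) (A : algorithm Omega)
  (p : \bar R) (k : nat) (a : R) : Prop :=
  for_large_n (fun d n => accurate_sanitizer_dn P A p (@coreset_queries p d k) a n).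

End Defs.

From HB Require Import structures.
From mathcomp Require Import all_boot all_order all_algebra.
From mathcomp Require Import all_classical all_reals all_analysis.
From mathcomp Require Import ring lra.
Import Order.TTheory GRing.Theory Num.Theory.
Local Open Scope ring_scope.

(* Two points of the unit l_p ball are at l_p distance at most 2 (for finite p
   by convexity of t |-> |t|^p), so every cost query takes values in [0, 4] on
   the ball, and so does its average over a dataset.  The multiplicative error
   alpha * cost(D) of a coreset is therefore at most 4 alpha. *)

Section PowR.
Context {R : realType}.

Lemma powR_normB_le (a b r : R) : 1 <= r ->
  `|a - b| `^ r <= 2 `^ r / 2 * (`|a| `^ r + `|b| `^ r).
Proof.
move=> r1.
have midpoint_convex : `|2^-1 * a + 2^-1 * - b| `^ r
    <= 2^-1 * `|a| `^ r + 2^-1 * `|- b| `^ r.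
  rewrite (@le_trans _ _ ((2^-1 * `|a| + 2^-1 * `|- b|) `^ r))//.
    rewrite ge0_ler_powR ?nnegrE ?(le_trans _ r1)//.
    by rewrite (le_trans (ler_normD _ _))// 2!normrM ger0_norm.
  rewrite {2 4}(_ : 2^-1 = 1 - 2^-1); last by rewrite {2}(splitr 1) div1r addrK.
  by apply: (convex_powR r1 (Itv01 _ _)) => //=;
    rewrite ?inE/= ?in_itv/= ?normr_ge0// ?invr_ge0// invf_le1 ?ler1n.
have -> : a - b = 2 * (2^-1 * a + 2^-1 * - b) by field.
rewrite normrM powRM// ger0_norm// -mulrA ler_wpM2l ?powR_ge0//.
by rewrite normrN in midpoint_convex; rewrite mulrDr.
Qed.

Lemma powR_inv_le1 (s r : R) : 0 < r -> 0 <= s -> (s `^ r^-1 <= 1) = (s <= 1).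
Proof.
move=> r0 s0; apply/idP/idP => s1.
  have := ge0_ler_powR (ltW r0) (powR_ge0 s r^-1) ler01 s1.
  by rewrite -powRrM mulVf ?gt_eqF// powRr1// powR1.
have rV_ge0 : 0 <= r^-1 by rewrite invr_ge0 ltW.
have := ge0_ler_powR rV_ge0 s0 ler01 s1.
by rewrite powR1.
Qed.

End PowR.

Section UnitBall.
Context {R : realType}.
Variable d : nat.

Lemma lpnorm_ge0 (q : \bar R) (v : vec R d) : 0 <= lpnorm q v.
Proof.
case: q => [r||] //=; first exact: powR_ge0.
by apply: (big_ind (fun y => 0 <= y)) => // a b ha hb; rewrite le_max ha.
Qed.

Lemma avg_ge0_le (f : vec R d -> R) (D : seq (vec R d)) (M : R) : 0 <= M ->
  (forall x, x \in D -> 0 <= f x <= M) -> 0 <= avg f D <= M.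
Proof.
move=> M0 hf; rewrite /avg; have [->|D_gt0] := posnP (size D).
  by rewrite invr0 mulr0 lexx.
have sum_ge0 : 0 <= \sum_(x <- D) f x.
  by rewrite big_seq sumr_ge0// => x /hf /andP[].
rewrite divr_ge0 ?ler0n//= ler_pdivrMr ?ltr0n//.
apply: (@le_trans _ _ (\sum_(x <- D) M)).
  by rewrite !big_seq; apply: ler_sum => x /hf /andP[].
by rewrite big_const_seq count_predT iter_addr_0 mulr_natr.
Qed.

Variable p : \bar R.
Hypothesis p_ge1 : (1 <= p)%E.

Lemma lpnormB_le2 (x c : vec R d) :
  in_ball p x -> in_ball p c -> lpnorm p (x - c) <= 2.
Proof.
move: p_ge1; rewrite /in_ball.
case: p => [r||] //=; rewrite ?lee_fin => r1; last first.
  move=> hx hc; apply: (big_ind (fun y => y <= 2)) => [//||i _].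
    by move=> ? ? ? ?; rewrite ge_max; apply/andP.
  have coord_le1 (v : vec R d) : \big[Num.max/0]_(j < d) `|v ord0 j| <= 1 ->
      `|v ord0 i| <= 1.
    by apply: le_trans; rewrite (bigD1 i) //= le_max lexx.
  rewrite !mxE (le_trans (ler_normB _ _))//.
  by have := coord_le1 _ hx; have := coord_le1 _ hc; lra.
have r0 : 0 < r by apply: lt_le_trans r1.
have S_ge0 (v : vec R d) : 0 <= \sum_(i < d) `|v ord0 i| `^ r.
  by apply: sumr_ge0 => i _; exact: powR_ge0.
rewrite (powR_inv_le1 _ _ r0 (S_ge0 x)) (powR_inv_le1 _ _ r0 (S_ge0 c)) => Sx Sc.
have SB : \sum_(i < d) `|(x - c) ord0 i| `^ r <= 2 `^ r.
  apply: (@le_trans _ _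
    (\sum_(i < d) 2 `^ r / 2 * (`|x ord0 i| `^ r + `|c ord0 i| `^ r))).
    by apply: ler_sum => i _; rewrite !mxE powR_normB_le.
  rewrite -mulr_sumr big_split /= -[leRHS]mulr1 -mulrA.
  by rewrite ler_wpM2l ?powR_ge0// ler_pdivrMl//; lra.
have rV_ge0 : 0 <= r^-1 by rewrite invr_ge0 ltW.
apply: le_trans (ge0_ler_powR rV_ge0 (S_ge0 _) (powR_ge0 2 r) SB) _.
by rewrite -powRrM mulfV ?lt0r_neq0 ?powRr1.
Qed.

Lemma cost_ge0_le4 (C : seq (vec R d)) (x : vec R d) :
  dataset_in_ball p C -> in_ball p x -> 0 <= cost p C x <= 4.
Proof.
move=> hC hx.
have dist2_bound c : in_ball p c -> 0 <= lpnorm p (x - c) ^+ 2 <= 4.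
  move=> hc; have := lpnorm_ge0 p (x - c); have := lpnormB_le2 _ _ hx hc.
  by rewrite sqr_ge0 /=; nra.
case: C hC => [|c cs] /=; first by move=> _; rewrite lexx ler0n.
move=> /andP[hc /allP hcs]; rewrite big_seq.
apply: (big_ind (fun y => 0 <= y <= 4)); first exact: dist2_bound.
  by move=> a b /andP[a0 a4] /andP[b0 b4]; rewrite le_min ge_min a0 b0 a4.
by move=> c' /hcs; exact: dist2_bound.
Qed.

Lemma coreset_accurate_estimate k (alpha beta : R) (D tD : seq (vec R d)) :
  0 <= alpha -> dataset_in_ball p D -> is_coreset k p alpha beta D tD ->
  accurate_estimate (coreset_queries p k) (4 * alpha + beta) D tD.
Proof.
move=> alpha_ge0 hD [_ coreset_bounds] _ [C [hC ->]].
have [lo hi] := coreset_bounds C hC.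
have /andP[avg_ge0 avg_le4] : 0 <= avg (cost p C) D <= 4.
  apply: avg_ge0_le => // x xD; apply: cost_ge0_le4; first by case: hC.
  by move/allP: hD; apply.
have : alpha * avg (cost p C) D <= alpha * 4 by rewrite ler_wpM2l.
by rewrite ler_norml => ?; apply/andP; split; lra.
Qed.

End UnitBall.

Lemma whpS (R : realType) dO (Omega : measurableType dO)
    (P : probability Omega R) (E E' : set Omega) :
  (E `<=` E')%classic -> whp P E -> whp P E'.
Proof.
by move=> EE' [F [mF FE PF]]; exists F; split => //; apply: subset_trans EE'.
Qed.

Lemma for_large_nW (R : realType) (Q Q' : nat -> nat -> Prop) :
  (forall d n, Q d n -> Q' d n) -> for_large_n R Q -> for_large_n R Q'.
Proof.
by move=> QQ' [nu [c [nu_gt0 c_gt0 HQ]]]; exists nu, c; split => // d n /HQ /QQ'.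
Qed.

Theorem mainTheorem5 (R : realType) (k : nat) (p : \bar R) (alpha beta : R)
  (dO : measure_display) (Omega : measurableType dO) (P : probability Omega R)
  (A : algorithm R Omega) :
  (1 <= p)%E -> 0 <= alpha -> 0 <= beta ->
  coreset_estimator P A k p alpha beta ->
  coreset_accurate_sanitizer P A p k (4 * alpha + beta).
Proof.
move=> p_ge1 alpha_ge0 _; apply: for_large_nW => d n estimator D sizeD hD.
apply: whpS (estimator D sizeD hD) => w.
exact: coreset_accurate_estimate.
Qed.
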